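(* For any mm-space $X$, \[ \square(X,* )\ge 1-\sup_{x\in X}\mu_X(U_1(x)), \] where $U_1(x)=\{y\in X: d_X(x,y)<1\}$ and $*$ is the one-point mm-space.
   Context: An mm-space is a triple $(X,d_X,\mu_X)$ where $(X,d_X)$ is a complete separable metric space and $\mu_X$ is a Borel probability measure on $X$. A parameter of $X$ is a Borel map $\varphi\colon [0,1)\to X$ with $\varphi_*\mathcal{L}^1=\mu_X$. The box distance $\square(X,Y)$ is the infimum of $\varepsilon\ge 0$ such that there exist parameters $\varphi$ of $X$, $\psi$ of $Y$ and a Borel set $I_0\subset[0,1)$ with $\mathcal{L}^1(I_0)\ge 1-\varepsilon$ and $|d_X(\varphi(s),\varphi(t))-d_Y(\psi(s),\psi(t))|\le\varepsilon$ for all $s,t\in I_0$. The one-point mm-space $*$ has one point with the Dirac measure. *)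

From HB Require Import structures.
From mathcomp Require Import all_boot all_order all_algebra.
From mathcomp Require Import all_classical all_reals all_analysis.
Set Implicit Arguments. Unset Strict Implicit. Unset Printing Implicit Defensive.
Import Order.TTheory GRing.Theory Num.Theory.
Import numFieldNormedType.Exports.
Local Open Scope classical_set_scope.
Local Open Scope ring_scope.

Section MMDefs.
Variable R : realType.

Definition is_metric (X : Type) (d : X -> X -> R) : Prop :=
  [/\ (forall x y, 0 <= d x y),
      (forall x y, d x y = 0 <-> x = y),
      (forall x y, d x y = d y x) &
      (forall x y z, d x z <= d x y + d y z)].

Definition open_d (X : Type) (d : X -> X -> R) (U : set X) : Prop :=
  forall x, U x -> exists2 e : R, 0 < e & [set y | d x y < e] `<=` U.

Definition borel_d (X : Type) (d : X -> X -> R) : set (set X) :=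
  <<s [set U | open_d d U] >>.

Definition complete_d (X : Type) (d : X -> X -> R) : Prop :=
  forall u : nat -> X,
    (forall e : R, 0 < e -> exists N : nat, forall m n : nat,
        (N <= m)%N -> (N <= n)%N -> d (u m) (u n) < e) ->
    exists l : X, forall e : R, 0 < e -> exists N : nat, forall n : nat,
        (N <= n)%N -> d (u n) l < e.

Definition separable_d (X : Type) (d : X -> X -> R) : Prop :=
  exists D : set X, countable D /\
    forall x e, 0 < e -> exists2 y, D y & d x y < e.

Definition borel_probability (X : Type) (d : X -> X -> R)
    (mu : set X -> \bar R) : Prop :=
  [/\ mu set0 = 0%E,
      (forall A, borel_d d A -> (0 <= mu A)%E),
      mu setT = 1%E &
      (forall F : nat -> set X, (forall n, borel_d d (F n)) ->
         trivIset setT F ->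
         (fun n => \sum_(0 <= i < n) mu (F i))%E @ \oo --> mu (\bigcup_n F n))].

End MMDefs.

Record mmspace (R : realType) := MMSpace {
  mm_car :> Type;
  mm_dist : mm_car -> mm_car -> R;
  mm_mu : set mm_car -> \bar R;
  mm_metric : is_metric mm_dist;
  mm_complete : complete_d mm_dist;
  mm_separable : separable_d mm_dist;
  mm_prob : borel_probability mm_dist mm_mu }.
Arguments mm_dist {R} m x y.
Arguments mm_mu {R} m A.

Section Box.
Variable R : realType.

Definition I01 : set R := [set t : R | 0 <= t < 1].

(** A parameter of X: a Borel map [0,1) -> X pushing Lebesgue measure to mu_X.
    (phi is a function on R; only its restriction to [0,1) matters.) *)
Definition is_parameter (X : mmspace R) (phi : R -> X) : Prop :=
  (forall A : set X, borel_d (mm_dist X) A -> measurable (I01 `&` phi @^-1` A)) /\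
  (forall A : set X, borel_d (mm_dist X) A ->
     lebesgue_measure (I01 `&` phi @^-1` A) = mm_mu X A).

Definition box_admissible (X Y : mmspace R) (e : R) : Prop :=
  0 <= e /\
  exists (phi : R -> X) (psi : R -> Y) (I0 : set R),
    [/\ is_parameter phi, is_parameter psi,
        measurable I0 /\ I0 `<=` I01,
        ((1 - e)%:E <= lebesgue_measure I0)%E &
        forall s t, I0 s -> I0 t ->
          `|mm_dist X (phi s) (phi t) - mm_dist Y (psi s) (psi t)| <= e].

Definition box (X Y : mmspace R) : \bar R :=
  ereal_inf [set e%:E | e in box_admissible X Y].

Definition U1 (X : mmspace R) (x : X) : set X :=
  [set y | mm_dist X x y < 1].

Definition pt_dist (x y : unit) : R := 0.
Definition pt_mu (A : set unit) : \bar R :=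
  if pselect (A tt) then 1%E else 0%E.

Lemma pt_metric : is_metric pt_dist.
Proof.
split.
- by move=> x y; rewrite /pt_dist lexx.
- by move=> [] []; split.
- by [].
- by move=> x y z; rewrite /pt_dist addr0.
Qed.

Lemma pt_complete : complete_d pt_dist.
Proof. by move=> u _; exists tt => e e0; exists 0%N => n _; rewrite /pt_dist. Qed.

Lemma pt_separable : separable_d pt_dist.
Proof.
exists setT; split; first exact: countableP.
by move=> x e e0; exists tt => //; rewrite /pt_dist.
Qed.

Lemma pt_prob : borel_probability pt_dist pt_mu.
Proof.
split.
- by rewrite /pt_mu; case: pselect.
- by move=> A _; rewrite /pt_mu; case: pselect.
- by rewrite /pt_mu; case: pselect => // h; exfalso; exact: h I.
move=> F _ tF.
case: (pselect (exists i, F i tt)) => [[i Fi]|nF].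
  have -> : pt_mu (\bigcup_n F n) = 1%E.
    by rewrite /pt_mu; case: pselect => // -[]; exists i.
  have F0 j : j != i -> pt_mu (F j) = 0%E.
    move=> ji; rewrite /pt_mu; case: pselect => // Fj.
    have ij : i = j by apply: tF => //; exists tt.
    by move: ji; rewrite ij eqxx.
  apply: cvg_near_cst; exists i.+1 => // n /= ni.
  rewrite (big_cat_nat _ (n := i.+1)) //= big_nat_recr //=.
  rewrite big1_seq ?add0e; last first.
    move=> j; rewrite mem_index_iota => /andP[h1 h2].
    by apply: F0; move/andP: h2 => [_ h]; rewrite neq_ltn h.
  rewrite big1_seq ?adde0; first by rewrite /pt_mu; case: pselect.
  move=> j; rewrite mem_index_iota => /andP[h1 h2].
  by apply: F0; move/andP: h2 => [h _]; rewrite neq_ltn h orbT.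
have -> : pt_mu (\bigcup_n F n) = 0%E.
  rewrite /pt_mu; case: pselect => // h; exfalso.
  by case: h => j _ Fj; apply: nF; exists j.
apply: cvg_near_cst; exists 0%N => // n _.
rewrite big1_seq // => j _; rewrite /pt_mu; case: pselect => // Fj.
by case: nF; exists j.
Qed.

Definition pt : mmspace R :=
  @MMSpace R unit pt_dist pt_mu pt_metric pt_complete pt_separable pt_prob.

End Box.
Arguments pt {R}.

From HB Require Import structures.
From mathcomp Require Import all_boot all_order all_algebra.
From mathcomp Require Import all_classical all_reals all_analysis.
From mathcomp Require Import lra.
Set Implicit Arguments. Unset Strict Implicit. Unset Printing Implicit Defensive.
Import Order.TTheory GRing.Theory Num.Theory.
Local Open Scope classical_set_scope.
Local Open Scope ereal_scope.

(* Against the one-point space the box condition only says that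
   d(phi s, phi t) <= e for s, t in I0.  If e < 1, then I0 is nonempty (its
   measure is at least 1 - e > 0) and phi maps all of I0 into the unit ball
   around phi s for any s in I0, so 1 - e <= |I0| <= mu(U_1(phi s)).  If
   e >= 1 the bound 1 - e <= 0 is trivial. *)

Section UnitBalls.
Variables (R : realType) (X : mmspace R).

Lemma borel_U1 (x : X) : borel_d (mm_dist X) (U1 x).
Proof.
apply: sub_gen_smallest => y /= xy1.
have [_ _ _ triangle] := mm_metric X.
exists (1 - mm_dist X x y)%R; first by rewrite subr_gt0.
by move=> z /= yz; have := triangle x y z; rewrite /U1 /=; lra.
Qed.

Lemma parameter_measure_le (phi : R -> X) (A : set X) (B : set R) :
  is_parameter phi -> borel_d (mm_dist X) A ->
  measurable B -> B `<=` @I01 R -> (forall t, B t -> A (phi t)) ->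
  lebesgue_measure B <= mm_mu X A.
Proof.
move=> [mphi phi_mu] bA mB BI01 phiBA; rewrite -phi_mu //.
apply: le_measure; rewrite ?inE //; first exact: mphi.
by move=> t Bt; split; [exact: BI01 | exact: phiBA].
Qed.

Lemma box_admissible_pt_U1 (e : R) : box_admissible X pt e ->
  exists x : X, (1 - e)%:E <= mm_mu X (U1 x).
Proof.
move=> [_ [phi [psi [I0 [phi_par _ [mI0 I0I01] I0_large close]]]]].
have [_ mu_ge0 _ _] := mm_prob X.
have [e_lt1|e_ge1] := ltP e 1%R; last first.
  exists (phi 0%R); apply: le_trans (mu_ge0 _ (borel_U1 _)).
  by rewrite lee_fin subr_le0.
have [s I0s] : exists s, I0 s.
  apply/not_existsP => I0_empty.
  have I0_0 : I0 = set0 by apply/seteqP; split => // t /I0_empty.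
  by move: I0_large; rewrite I0_0 measure0 lee_fin; lra.
exists (phi s); apply: le_trans I0_large _.
apply: (parameter_measure_le phi_par (borel_U1 _)) => // t I0t; rewrite /U1 /=.
have [dist_ge0 _ _ _] := mm_metric X.
have := close s t I0s I0t; rewrite /pt_dist subr0 (ger0_norm (dist_ge0 _ _)).
lra.
Qed.

End UnitBalls.

Theorem proposition4p1 (R : realType) (X : mmspace R) :
  1 - ereal_sup [set mm_mu X (U1 x) | x in [set: X]] <= box X pt.
Proof.
apply/ereal_infP => _ [e /box_admissible_pt_U1 [x ex] <-].
rewrite lee_subel_addr // -leeBlDl //; apply: le_trans ex _.
by apply: ereal_sup_ubound; exists x.
Qed.
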